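(* Consider a procedure with body $s_1; \ldots; s_n$, and let $\Lambda, \Upsilon, \mathit{true} \vdash s_i; \ldots; s_n : \Phi_{\mathrm{safe}}$ be the inferred safety condition for the suffix starting at $s_i$. Suppose the technique adds the statement $\mathtt{assume}\ \Phi$ (with $\Phi = \neg\Phi_{\mathrm{safe}}$) before $s_i; \ldots; s_n$. Then $\Phi$ is a necessary condition for $s_i; \ldots; s_n$ to have an assertion violation.
   Context: Programs are in an imperative language with assignments, heap reads/writes, $\mathtt{malloc}$, procedure calls, $\mathtt{assert}\ p$, $\mathtt{assume}\ p$ and nondeterministic conditionals; execution stops at the first assertion or assumption violation, and an execution is failing iff it ends in an assertion violation. The judgment $\Lambda,\Upsilon,\Phi \vdash s : \Phi'$ denotes a lightweight backward safety-condition inference (using an aliasing/side-effect oracle $\Lambda$ and a procedure-summary environment $\Upsilon$) that is sound in the sense that $\Phi' \Rightarrow \mathit{wp}(s,\Phi)$ for terminating $s$ (with $\mathtt{assert}\ p$ giving $p\wedge\Phi$ and $\mathtt{assume}\ p$ giving $p\Rightarrow\Phi$). Program trimming (intraprocedural instrumentation) inserts $\mathtt{assume}\ \neg\Phi_{\mathrm{safe}}$ right before $s_i$, where $\Phi_{\mathrm{safe}}$ is the safety condition inferred for $s_i;\ldots;s_n$ from postcondition $\mathit{true}$. *)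

From Stdlib Require Import ZArith List.
Open Scope Z_scope.

Definition var := nat.
Definition pname := nat.

Record state := mkState {
  vars  : var -> Z;
  heap  : Z -> Z;
  alloc : Z -> bool
}.

Definition upd {A} (f : A -> Z) (eqd : forall a b : A, {a = b} + {a <> b})
  (a : A) (v : Z) : A -> Z := fun b => if eqd a b then v else f b.

Definition set_var (s : state) (x : var) (v : Z) : state :=
  mkState (upd (vars s) Nat.eq_dec x v) (heap s) (alloc s).
Definition set_heap (s : state) (a : Z) (v : Z) : state :=
  mkState (vars s) (upd (heap s) Z.eq_dec a v) (alloc s).
Definition set_alloc (s : state) (a : Z) : state :=
  mkState (vars s) (heap s) (fun b => if Z.eq_dec a b then true else alloc s b).

Definition expr := state -> Z.
Definition pred := state -> Prop.

Inductive stmt :=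
| Skip
| Assign (x : var) (e : expr)
| HRead (x : var) (e : expr)              (* x := *e *)
| Store (e1 e2 : expr)                   (* *e1 := e2 *)
| Malloc (x : var)
| Call (p : pname)
| Assert (p : pred)
| Assume (p : pred)
| Choice (s1 s2 : stmt)                  (* if ( * ) s1 else s2 *)
| Seq (s1 s2 : stmt).

Definition penv := pname -> stmt.

Inductive outcome :=
| Normal (s : state)
| AssertFail
| AssumeFail.

Inductive exec (P : penv) : stmt -> state -> outcome -> Prop :=
| E_Skip s : exec P Skip s (Normal s)
| E_Assign x e s : exec P (Assign x e) s (Normal (set_var s x (e s)))
| E_Read x e s : exec P (HRead x e) s (Normal (set_var s x (heap s (e s))))
| E_Store e1 e2 s : exec P (Store e1 e2) s (Normal (set_heap s (e1 s) (e2 s)))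
| E_Malloc x s a : alloc s a = false ->
    exec P (Malloc x) s (Normal (set_var (set_alloc s a) x a))
| E_Call p s o : exec P (P p) s o -> exec P (Call p) s o
| E_AssertOk (p : pred) s : p s -> exec P (Assert p) s (Normal s)
| E_AssertFail (p : pred) s : ~ p s -> exec P (Assert p) s AssertFail
| E_AssumeOk (p : pred) s : p s -> exec P (Assume p) s (Normal s)
| E_AssumeFail (p : pred) s : ~ p s -> exec P (Assume p) s AssumeFail
| E_Choice1 s1 s2 s o : exec P s1 s o -> exec P (Choice s1 s2) s o
| E_Choice2 s1 s2 s o : exec P s2 s o -> exec P (Choice s1 s2) s o
| E_SeqNormal s1 s2 s s' o :
    exec P s1 s (Normal s') -> exec P s2 s' o -> exec P (Seq s1 s2) s o
| E_SeqAssert s1 s2 s : exec P s1 s AssertFail -> exec P (Seq s1 s2) s AssertFail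
| E_SeqAssume s1 s2 s : exec P s1 s AssumeFail -> exec P (Seq s1 s2) s AssumeFail.

(* semantic weakest precondition (partial correctness / terminating runs):
   no terminating execution fails an assertion, and every normally
   terminating execution ends in Phi. Hence wp(assert p, Phi) = p /\ Phi
   and wp(assume p, Phi) = p -> Phi. *)
Definition wp (P : penv) (s : stmt) (Phi : pred) : pred :=
  fun st => forall o, exec P s st o ->
    match o with
    | Normal st' => Phi st'
    | AssertFail => False
    | AssumeFail => True
    end.

Fixpoint seq_of (l : list stmt) : stmt :=
  match l with
  | nil => Skip
  | s :: l' => Seq s (seq_of l')
  end.

(* the judgment  Lam, Ups, Phi |- s : Phi'  as an abstract relation *)
Definition judgment (Lam Ups : Type) := Lam -> Ups -> pred -> stmt -> pred -> Prop.

Definition sound_judgment (P : penv) {Lam Ups : Type} (J : judgment Lam Ups) : Prop :=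
  forall L U Phi s Phi', J L U Phi s Phi' -> forall st, Phi' st -> wp P s Phi st.

Definition has_assert_violation (P : penv) (s : stmt) (st : state) : Prop :=
  exec P s st AssertFail.

From Stdlib Require Import ZArith List.

Lemma wp_no_assert_violation (P : penv) (s : stmt) (Phi : pred) (st : state) :
  wp P s Phi st -> ~ has_assert_violation P s st.
Proof.
  intros Hwp Hviolation.
  exact (Hwp AssertFail Hviolation).
Qed.

Lemma sound_judgment_no_assert_violation (P : penv) (Lam Ups : Type)
  (J : judgment Lam Ups) (L : Lam) (U : Ups) (Phi Phi' : pred) (s : stmt)
  (st : state) :
  sound_judgment P J -> J L U Phi s Phi' -> Phi' st ->
  ~ has_assert_violation P s st.
Proof.
  intros Hsound HJ HPhi'.
  apply (wp_no_assert_violation P s Phi).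
  exact (Hsound L U Phi s Phi' HJ st HPhi').
Qed.

(* body = [s_1; ...; s_n]; the suffix s_i; ...; s_n is  skipn (i-1) body
   (0-based index k = i-1). Phi = ~ Phi_safe is necessary for failure. *)
Theorem theorem5p1 (Lam Ups : Type) (P : penv) (J : judgment Lam Ups)
  (Hsound : sound_judgment P J)
  (L : Lam) (U : Ups) (body : list stmt) (k : nat) (Phi_safe : pred) :
  J L U (fun _ => True) (seq_of (skipn k body)) Phi_safe ->
  let Phi : pred := fun st => ~ Phi_safe st in
  forall st, has_assert_violation P (seq_of (skipn k body)) st -> Phi st.
Proof.
  intros HJ Phi st Hviolation Hsafe.
  exact (sound_judgment_no_assert_violation P Lam Ups J L U _ Phi_safe _ st
           Hsound HJ Hsafe Hviolation).
Qed.
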